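(* Let $D$ denote the set of variable network games $(v,\rho)\in\mathbb V^N\times\mathbb P^N$ such that $v$ is component additive. Then: (i) the Expected Position Value $\Psi^p$ is an allocation rule on the class of variable network games which, on $D$, satisfies component balance and the balanced link contributions property; and (ii) if $\Psi\colon\mathbb V^N\times\mathbb P^N\to\mathbb R^N$ is any allocation rule on the class of variable network games satisfying component balance and the balanced link contributions property for all $(v,\rho)\in D$, then $\Psi(v,\rho)=\Psi^p(v,\rho)$ for all $(v,\rho)\in D$. That is, $\Psi^p$ is the unique allocation rule on the class of component additive variable network games that satisfies component balance and the balanced link contributions property.
   Context: $N=\{1,\dots,n\}$ is a finite player set. A link is an unordered pair $ij=\{i,j\}$ of distinct players; $g_N$ is the set of all links; a network is any $g\subseteq g_N$; $\mathbb G^N$ is the set of all networks. For $g\in\mathbb G^N$: $N_i(g)=\{j\ne i: ij\in g\}$, $L_i(g)=\{ij\in g\}$ (links of $i$ in $g$), $N(g)=\bigcup_i N_i(g)$, and $N_0(g)=N\setminus N(g)$ (isolated players). $g+ij=g\cup\{ij\}$, $g-ij=g\setminus\{ij\}$. A component of $g$ is a nonempty subnetwork $h\subseteq g$ that is connected (any two players of $N(h)$ are joined by a path in $h$) and maximal (if $i\in N(h)$ and $ij\in g$ then $ij\in h$); $C(g)$ is the set of components of $g$. A network formation probability distribution is a map $\rho\colon\mathbb G^N\to[0,1]$ with $\sum_g\rho(g)=1$; $\mathbb P^N$ is the set of these. $\mathbb G(\rho)=\{g:\rho(g)>0\}$, and the extent is $g(\rho)=\bigcup_{g\in\mathbb G(\rho)}g$.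 For a network $g$, the restriction $\rho_g\in\mathbb P^N$ is $\rho_g(h)=\sum_{h'\subseteq g_N\setminus g}\rho(h\cup h')$ if $h\subseteq g$ and $\rho_g(h)=0$ otherwise. For a link $ij$, $\rho^{-ij}=\rho_{g_N-ij}$. A network game is $v\colon\mathbb G^N\to\mathbb R$ with $v(\varnothing)=0$; $\mathbb V^N$ is the set of these. $v$ is component additive if $v(g)=\sum_{h\in C(g)}v(h)$ for all $g$. A variable network game is a pair $(v,\rho)\in\mathbb V^N\times\mathbb P^N$. An allocation rule on the class of variable network games is a map $\Psi\colon\mathbb V^N\times\mathbb P^N\to\mathbb R^N$ with $\Psi_i(v,\rho)=0$ for every $i\in N_0(g(\rho))$. It is component balanced (on $(v,\rho)$ with $v$ component additive) if for every $h\in C(g(\rho))$: $\sum_{i\in N(h)}\Psi_i(v,\rho)=\sum_{g\in\mathbb G(\rho)}\rho(g)\,v(g\cap h)$. It satisfies the balanced link contributions property if for all players $i\neq j$: $\sum_{jk\in L_j(g(\rho))}[\Psi_i(v,\rho)-\Psi_i(v,\rho^{-jk})]=\sum_{ik\in L_i(g(\rho))}[\Psi_j(v,\rho)-\Psi_j(v,\rho^{-ik})]$. The Position Value for network games is $Y^p_i(v,g)=\tfrac12\sum_{ij\in g}\sum_{h\subseteq g-ij}\frac{\#h!\,(\#g-\#h-1)!}{\#g!}\,(v(h+ij)-v(h))$. The Expected Position Value is $\Psi^p(v,\rho)=\sum_{g\in\mathbb G^N}\rho(g)\,Y^p(v,g)$. *)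

From HB Require Import structures.
From mathcomp Require Import all_boot all_order all_algebra.
Set Implicit Arguments. Unset Strict Implicit. Unset Printing Implicit Defensive.
Import Order.TTheory GRing.Theory Num.Theory.
Local Open Scope ring_scope.

(* Players N = {1,...,n} are represented by 'I_n.
   A link is an unordered pair {i,j} of distinct players: a 2-element subset. *)
Definition link (n : nat) := {s : {set 'I_n} | #|s| == 2%N}.

(* A network is any set of links; the complete network g_N is [set: link n]. *)
Definition network (n : nat) := {set link n}.

Section Defs.
Variables (n : nat) (R : realFieldType).

Definition nbrs (g : network n) (i : 'I_n) : {set 'I_n} :=
  [set j | (j != i) && [exists l in g, val l == [set i; j]]].
Definition links_of (g : network n) (i : 'I_n) : network n :=
  [set l in g | i \in val l].
Definition players (g : network n) : {set 'I_n} :=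
  \bigcup_(i : 'I_n) nbrs g i.
Definition isolated (g : network n) : {set 'I_n} := ~: players g.

Definition adj (h : network n) : rel 'I_n :=
  fun i j => [exists l in h, val l == [set i; j]] && (i != j).

Definition is_component (g h : network n) : bool :=
  [&& h != set0, h \subset g,
      [forall i in players h, forall j in players h, connect (adj h) i j] &
      [forall i in players h, forall l in g, (i \in val l) ==> (l \in h)]].
Definition components (g : network n) : {set network n} :=
  [set h | is_component g h].

Definition is_game (v : network n -> R) : Prop := v set0 = 0.
Definition component_additive (v : network n -> R) : Prop :=
  forall g, v g = \sum_(h in components g) v h.

Definition is_prob (rho : network n -> R) : Prop :=
  (forall g, 0 <= rho g <= 1) /\ \sum_(g : network n) rho g = 1.

Definition extent (rho : network n -> R) : network n :=
  \bigcup_(g : network n | 0 < rho g) g.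

Definition restrict (rho : network n -> R) (g : network n) : network n -> R :=
  fun h => if h \subset g then
             \sum_(h' : network n | h' \subset ~: g) rho (h :|: h')
           else 0.

Definition remove_link (rho : network n -> R) (l : link n) : network n -> R :=
  restrict rho ([set: link n] :\ l).

Definition alloc := (network n -> R) -> (network n -> R) -> 'I_n -> R.

Definition is_allocation_rule (Psi : alloc) : Prop :=
  forall v rho, is_game v -> is_prob rho ->
    forall i, i \in isolated (extent rho) -> Psi v rho i = 0.

Definition in_D (v rho : network n -> R) : Prop :=
  [/\ is_game v, is_prob rho & component_additive v].

Definition component_balanced (Psi : alloc) (v rho : network n -> R) : Prop :=
  forall h, h \in components (extent rho) ->
    \sum_(i in players h) Psi v rho i =
    \sum_(g : network n | 0 < rho g) rho g * v (g :&: h).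

Definition balanced_link_contributions (Psi : alloc) (v rho : network n -> R)
  : Prop :=
  forall i j : 'I_n, i != j ->
    \sum_(l in links_of (extent rho) j)
       (Psi v rho i - Psi v (remove_link rho l) i) =
    \sum_(l in links_of (extent rho) i)
       (Psi v rho j - Psi v (remove_link rho l) j).

Definition position_value (v : network n -> R) (g : network n) (i : 'I_n) : R :=
  2^-1 * \sum_(l in links_of g i)
     \sum_(h : network n | h \subset g :\ l)
        ((#|h|`!)%:R * ((#|g| - #|h| - 1)`!)%:R / (#|g|`!)%:R)
          * (v (l |: h) - v h).

Definition expected_position_value : alloc :=
  fun v rho i => \sum_(g : network n) rho g * position_value v g i.

End Defs.

(* The position value of g pays player i half the Shapley values, in the game
   of the links of g, of the links at i, and Shapley values are differences
   P(g) - P(g - a) of the Hart-Mas-Colell potential P.  Hence deleting a link b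
   at j changes the value of i by half the sum, over the links a at i, of the
   second differences P(g) - P(g - a) - P(g - b) + P(g - a - b), which are
   symmetric in a and b: this is balanced link contributions.  Efficiency of
   the Shapley value together with component additivity gives component
   balance.  Since rho^{-l} is the image of rho under g |-> g - l, both
   properties pass to the expectation.
   Uniqueness is by induction on the extent of rho.  If Psi agrees with the
   expected position value on every rho^{-l}, balanced link contributions for
   both rules force their difference d to satisfy #L_j d_i = #L_i d_j, so on a
   component d is proportional to the number of links of each player, and
   component balance makes it vanish there. *)

From HB Require Import structures.
From mathcomp Require Import all_boot all_order all_algebra.
From mathcomp Require Import ring lra zify.
Import Order.TTheory GRing.Theory Num.Theory.
Local Open Scope ring_scope.
Set Implicit Arguments. Unset Strict Implicit. Unset Printing Implicit Defensive.

Lemma setD1_id (T : finType) (A : {set T}) (a : T) : a \notin A -> A :\ a = A.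
Proof. by move=> aA; apply/setDidPl; rewrite disjoint_sym disjoints1. Qed.

Lemma sum_mem_setU1 (T : finType) (V : nmodType) (a : T) (P : pred {set T})
    (F : {set T} -> V) :
  \sum_(S | P S && (a \in S)) F S =
  \sum_(S : {set T} | P (a |: S) && (a \notin S)) F (a |: S).
Proof.
rewrite (reindex_onto (fun S => a |: S) (fun S => S :\ a)) /=; last first.
  by move=> S /andP[_ aS]; rewrite setD1K.
apply: eq_bigl => S; rewrite setU11 andbT.
case aS: (a \in S) => /=; last by rewrite andbT setU1K ?aS // eqxx andbT.
rewrite andbF; apply/negbTE; apply: contraTN aS => /andP[_ /eqP <-].
by rewrite setD11.
Qed.

Lemma sum_split_setU1 (T : finType) (V : nmodType) (a : T) (F : {set T} -> V) :
  \sum_(S : {set T}) F S = \sum_(S : {set T} | a \notin S) (F S + F (a |: S)).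
Proof.
rewrite (bigID (fun S : {set T} => a \in S)) /= addrC big_split /=; congr (_ + _).
exact: (sum_mem_setU1 a predT).
Qed.

Section Networks.
Variable n : nat.
Implicit Types (g h C E S : network n) (l : link n) (x y : 'I_n).

Lemma link_ends l : exists x y, x != y /\ val l = [set x; y].
Proof. by apply/cards2P; case: l. Qed.

Lemma playersP g x : reflect (exists2 l, l \in g & x \in val l) (x \in players g).
Proof.
apply: (iffP bigcupP) => [[i _]|[l lg]].
  rewrite inE => /andP[_ /existsP[l /andP[lg /eqP E]]].
  by exists l; rewrite // E !inE eqxx orbT.
have [a [b [ab E]]] := link_ends l.
rewrite E !inE => /orP[]/eqP ->.
  by exists b => //; rewrite inE ab; apply/existsP; exists l; rewrite lg E setUC eqxx.
by exists a => //; rewrite inE eq_sym ab; apply/existsP; exists l; rewrite lg E eqxx.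
Qed.

Lemma players_link g l x : l \in g -> x \in val l -> x \in players g.
Proof. by move=> lg xl; apply/playersP; exists l. Qed.

Lemma players_subset g h : g \subset h -> players g \subset players h.
Proof.
move=> gh; apply/subsetP => x /playersP[l lg xl].
exact: players_link (subsetP gh l lg) xl.
Qed.

Lemma adj_sym g : symmetric (adj g).
Proof. by move=> x y; rewrite /adj eq_sym setUC. Qed.

Lemma adj_subset g h : g \subset h -> subrel (adj g) (adj h).
Proof.
move=> gh x y /andP[/existsP[l /andP[lg E]] xy]; rewrite /adj xy andbT.
by apply/existsP; exists l; rewrite (subsetP gh).
Qed.

Lemma adj_link g l x y : l \in g -> val l = [set x; y] -> x != y -> adj g x y.
Proof.
by move=> lg E xy; rewrite /adj xy andbT; apply/existsP; exists l; rewrite lg E eqxx.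
Qed.

Definition connected_net h :=
  [forall x in players h, forall y in players h, connect (adj h) x y].

Lemma connected_netP h :
  reflect (forall x y, x \in players h -> y \in players h -> connect (adj h) x y)
          (connected_net h).
Proof.
apply: (iffP forall_inP) => [c x y xh|c x xh]; first exact: (forall_inP (c x xh)).
by apply/forall_inP => y; apply: c.
Qed.

Lemma is_componentP g h :
  reflect [/\ h != set0, h \subset g, connected_net h &
             forall x l, x \in players h -> l \in g -> x \in val l -> l \in h]
          (is_component g h).
Proof.
apply: (iffP and4P) => -[h0 hg hc cl]; split=> //.
  by move=> x l xh lg; apply/implyP; apply: (forall_inP (forall_inP cl x xh)).
by apply/forall_inP => x xh; apply/forall_inP => l lg; apply/implyP; apply: cl.
Qed.

Lemma is_component_setUl g1 g2 C l0 :
  [disjoint players g1 & players g2] ->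
  is_component (g1 :|: g2) C -> l0 \in C -> l0 \in g1 -> is_component g1 C.
Proof.
move=> dj /is_componentP[C0 Cg /connected_netP conn cl] l0C l0g1.
have g1_closed : closed (adj C) (players g1).
  move=> x y /andP[/existsP[l /andP[lC /eqP E]] _].
  have [xl yl] : x \in val l /\ y \in val l by rewrite E !inE !eqxx orbT.
  move: (subsetP Cg l lC); rewrite inE => /orP[lg|lg].
    by rewrite (players_link lg xl) (players_link lg yl).
  by rewrite (disjointFl dj (players_link lg xl)) (disjointFl dj (players_link lg yl)).
have [x0 [? [_ E0]]] := link_ends l0.
have x0l0 : x0 \in val l0 by rewrite E0 !inE eqxx.
have Cg1 : C \subset g1.
  apply/subsetP => l lC; have [x [? [_ E]]] := link_ends l.
  have xl : x \in val l by rewrite E !inE eqxx.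
  have x0x := conn x0 x (players_link l0C x0l0) (players_link lC xl).
  have := closed_connect g1_closed x0x.
  rewrite (players_link l0g1 x0l0) => /esym xg1.
  move: (subsetP Cg l lC); rewrite inE => /orP[// | lg2].
  by move: (players_link lg2 xl); rewrite (disjointFr dj xg1).
apply/is_componentP; split=> // [|x l xC lg1 xl]; first exact/connected_netP.
by apply: cl xC _ xl; rewrite inE lg1.
Qed.

Lemma is_component_setU g1 g2 C :
  [disjoint players g1 & players g2] ->
  is_component g1 C -> is_component (g1 :|: g2) C.
Proof.
move=> dj /is_componentP[C0 Cg conn cl]; apply/is_componentP; split=> //.
  exact: subset_trans Cg (subsetUl _ _).
move=> x l xC; rewrite inE => /orP[lg|lg] xl; first exact: cl xC lg xl.
have xg1 : x \in players g1 := subsetP (players_subset Cg) x xC.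
by move: (players_link lg xl); rewrite (disjointFr dj xg1).
Qed.

Lemma components_setU g1 g2 :
  [disjoint players g1 & players g2] ->
  components (g1 :|: g2) = components g1 :|: components g2.
Proof.
move=> dj; have dj' := dj; rewrite disjoint_sym in dj'.
apply/setP => C; rewrite !inE; apply/idP/orP => [Cc|[] Cc]; last 2 first.
- exact: is_component_setU.
- by rewrite setUC; apply: is_component_setU.
have /is_componentP[/set0Pn[l lC] Cg _ _] := Cc.
move: (subsetP Cg l lC); rewrite inE => /orP[lg|lg]; [left | right].
  exact: is_component_setUl Cc lC lg.
by rewrite setUC in Cc; apply: is_component_setUl Cc lC lg.
Qed.

Lemma disjoint_components g1 g2 :
  [disjoint players g1 & players g2] -> [disjoint components g1 & components g2].
Proof.
move=> dj; apply/pred0P => C /=; apply/negP; rewrite !inE.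
case/andP=> /is_componentP[/set0Pn[l lC] C1 _ _] /is_componentP[_ C2 _ _].
have [x [? [_ E]]] := link_ends l.
have xl : x \in val l by rewrite E !inE eqxx.
move: (players_link (subsetP C2 _ lC) xl).
by rewrite (disjointFr dj (players_link (subsetP C1 _ lC) xl)).
Qed.

Lemma component_additive_setID (R : realFieldType) (v : network n -> R) E h S :
  component_additive v -> h \in components E -> S \subset E ->
  v S = v (S :&: h) + v (S :\: h).
Proof.
move=> ca; rewrite inE => /is_componentP[_ hE _ cl] SE.
have dj : [disjoint players (S :&: h) & players (S :\: h)].
  apply/pred0P => x /=; apply/negP => /andP[/playersP[l]].
  rewrite inE => /andP[_ lh] xl /playersP[l']; rewrite inE => /andP[l'h l'S] xl'.
  by move: (cl x l' (players_link lh xl) (subsetP SE _ l'S) xl'); rewrite (negbTE l'h).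
rewrite {1}(ca S) -{1}(setID S h) components_setU // (ca (S :&: h)) (ca (S :\: h)).
by rewrite -bigU ?disjoint_components //; apply: eq_bigl => C; rewrite !inE.
Qed.

Lemma connected_from h x0 :
  (forall x, x \in players h -> connect (adj h) x0 x) -> connected_net h.
Proof.
move=> c; apply/connected_netP => x y xh yh; apply: (connect_trans (y := x0)).
  by rewrite (sym_connect_sym (@adj_sym h)); apply: c.
exact: c.
Qed.

Lemma connected_set1 l : connected_net [set l].
Proof.
have [a [b [ab E]]] := link_ends l.
apply: (connected_from (x0 := a)) => x /playersP[l']; rewrite inE => /eqP ->.
rewrite E !inE => /orP[]/eqP ->; first exact: connect0.
exact/connect1/(adj_link (set11 l) E ab).
Qed.

Lemma connected_setU1 h l x :
  connected_net h -> x \in players h -> x \in val l -> connected_net (l |: h).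
Proof.
move=> /connected_netP c xh xl.
have [a [b [ab E]]] := link_ends l.
have Eba : val l = [set b; a] by rewrite E setUC.
have lh : l \in l |: h by rewrite setU11.
apply: (connected_from (x0 := x)) => p /playersP[l']; rewrite !inE.
case/orP=> [/eqP -> | l'h] pl'.
  move: xl pl'; rewrite E !inE => /orP[]/eqP -> /orP[]/eqP ->;
    rewrite ?connect0 //; apply: connect1.
    exact: adj_link lh E ab.
  by apply: adj_link lh Eba _; rewrite eq_sym.
apply: connect_sub (c x p xh (players_link l'h pl')) => y z yz.
exact/connect1/(adj_subset (subsetUr _ _) yz).
Qed.

Lemma exists_component E i :
  i \in players E -> exists2 h, h \in components E & i \in players h.
Proof.
case/playersP=> l0 l0E il0.
pose P h := [&& h \subset E, connected_net h & i \in players h].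
have P0 : P [set l0].
  by rewrite /P sub1set l0E connected_set1 (players_link (set11 l0) il0).
case: (arg_maxnP (fun h => #|h|) P0) => h /and3P[hE hc ih] hmax.
exists h => //; rewrite inE; apply/is_componentP; split=> //.
  by apply/set0Pn; case/playersP: ih => l lh _; exists l.
move=> x l xh lE xl; apply/contraT => lh.
have : P (l |: h).
  rewrite /P subUset sub1set lE hE (connected_setU1 hc xh xl) /=.
  exact: subsetP (players_subset (subsetUr _ _)) _ ih.
by move/hmax; rewrite cardsU1 lh add1n /= ltnn.
Qed.

End Networks.

Section Weights.
Variable R : realFieldType.

Definition shapley_weight (k s : nat) : R :=
  (s`!)%:R * ((k - s - 1)`!)%:R / (k`!)%:R.

Definition potential_weight (k s : nat) : R :=
  ((s.-1)`!)%:R * ((k - s)`!)%:R / (k`!)%:R.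

Lemma natr_fact_neq0 k : (k`!)%:R != 0 :> R.
Proof. by rewrite pnatr_eq0 -lt0n fact_gt0. Qed.

Lemma potential_weightS k s : potential_weight k s.+1 = shapley_weight k s.
Proof. by rewrite /potential_weight /shapley_weight subnS subn1. Qed.

Lemma potential_weight_predn k s : (0 < s < k)%N ->
  potential_weight k.-1 s - potential_weight k s = shapley_weight k s.
Proof.
case: s => // s /= lt; have -> : k = (k - s.+2 + s.+1).+1 by lia.
set m := (k - s.+2)%N; rewrite /potential_weight /shapley_weight /= subn1 /=.
rewrite subSn ?leq_addl // addnK (factS m) (factS s) (factS (m + s.+1)) !natrM.
have := natr_fact_neq0 (m + s.+1); rewrite -[(m + s.+1).+1]addn1 -addSnnS !natrD.
move=> ms0; field; rewrite ms0 /=.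
by apply/negP => /eqP; have := ler0n R m; have := ler0n R s; lra.
Qed.

Lemma mul_potential_weight k s : (s < k)%N ->
  k%:R * potential_weight k s = (k - s)%:R * potential_weight k.-1 s.
Proof.
move=> lt; have -> : k = (k - s.+1 + s).+1 by lia.
set m := (k - s.+1)%N; rewrite /potential_weight /= subSn ?leq_addl // addnK.
have := natr_fact_neq0 (m + s); rewrite (factS m) (factS (m + s)) !natrM.
move=> ms0; field; rewrite ms0 /=.
by apply/negP => /eqP; have := ler0n R m; have := ler0n R s; lra.
Qed.

Lemma mul_potential_weight_diag k : (0 < k)%N -> k%:R * potential_weight k k = 1.
Proof.
case: k => // k _; rewrite /potential_weight subnn /= factS natrM fact0.
have := natr_fact_neq0 k => k0; field.
by rewrite k0 /=; apply/negP => /eqP; have := ler0n R k; lra.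
Qed.

End Weights.

Section Potential.
Variables (n : nat) (R : realFieldType).
Implicit Types (g h S : network n) (a l : link n) (u : network n -> R).

Definition shapley u g a : R :=
  \sum_(h : network n | h \subset g :\ a)
    shapley_weight R #|g| #|h| * (u (a |: h) - u h).

Definition potential u g : R :=
  \sum_(S : network n | S \subset g) potential_weight R #|g| #|S| * u S.

Lemma shapley_potential u g a : u set0 = 0 -> a \in g ->
  shapley u g a = potential u g - potential u (g :\ a).
Proof.
move=> u0 ag; have cg : #|g| = #|g :\ a|.+1 by rewrite (cardsD1 a g) ag.
rewrite /potential (bigID (fun S => a \in S)) /= sum_mem_setU1.
have with_a S : (a |: S \subset g) && (a \notin S) = (S \subset g :\ a).
  by rewrite subsetD1 subUset sub1set ag.
have without_a S : (S \subset g) && (a \notin S) = (S \subset g :\ a).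
  by rewrite subsetD1.
rewrite (eq_bigl _ _ with_a) (eq_bigl _ _ without_a) -addrA -sumrB -big_split /=.
apply: eq_bigr => S sS; have aS : a \notin S by move: sS; rewrite subsetD1 => /andP[].
have Slt : (#|S| < #|g|)%N by rewrite cg ltnS subset_leq_card.
rewrite cardsU1 aS add1n potential_weightS -mulrBl.
have [/eqP|S0] := posnP #|S|.
  by rewrite cards_eq0 => /eqP->; rewrite u0 subr0 !mulr0 addr0.
have -> : #|g :\ a| = #|g|.-1 by rewrite cg.
by rewrite -potential_weight_predn ?S0 ?Slt //; ring.
Qed.

Lemma sum_potential_setD1 u g :
  \sum_(a in g) potential u (g :\ a) =
  \sum_(S : network n | S \subset g)
     (#|g| - #|S|)%:R * (potential_weight R #|g|.-1 #|S| * u S).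
Proof.
transitivity (\sum_(a in g) \sum_(S : network n | S \subset g)
    (if a \notin S then potential_weight R #|g|.-1 #|S| * u S else 0)).
  apply: eq_bigr => a ag; rewrite -big_mkcondr /potential (cardsD1 a g) ag /=.
  by apply: eq_bigl => S; rewrite subsetD1.
rewrite exchange_big /=; apply: eq_bigr => S Sg.
rewrite -big_mkcondr /= sumr_const mulr_natl; congr (_ *+ _).
by rewrite -{2}(setIidPr Sg) -cardsD; apply: eq_card => a; rewrite !inE andbC.
Qed.

Lemma shapley_efficient u g : u set0 = 0 -> \sum_(a in g) shapley u g a = u g.
Proof.
move=> u0; rewrite (eq_bigr _ (fun a => shapley_potential u0)) sumrB sumr_const.
rewrite sum_potential_setD1 /potential -mulr_natl mulr_sumr -sumrB.
rewrite (bigD1 g) //= big1 ?addr0 => [|S /andP[Sg Sng]]; last first.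
  have Slt : (#|S| < #|g|)%N by apply: proper_card; rewrite properEneq Sng.
  by rewrite mulrA mul_potential_weight // -mulrA subrr.
rewrite subnn mul0r subr0.
have [/eqP|g0] := posnP #|g|; first by rewrite cards_eq0 => /eqP->; rewrite u0 !mulr0.
by rewrite mulrA mul_potential_weight_diag // mul1r.
Qed.

Lemma eq_shapley u u' g a : a \in g ->
  (forall S, S \subset g -> u S = u' S) -> shapley u g a = shapley u' g a.
Proof.
move=> ag uu'; apply: eq_bigr => S; rewrite subsetD1 => /andP[Sg _].
by rewrite !uu' // subUset sub1set ag.
Qed.

Lemma shapleyD u1 u2 g a :
  shapley (fun S => u1 S + u2 S) g a = shapley u1 g a + shapley u2 g a.
Proof. by rewrite -big_split; apply: eq_bigr => S _ /=; ring. Qed.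

Lemma shapley_null u g a : (forall S, u (a |: S) = u S) -> shapley u g a = 0.
Proof. by move=> null; apply: big1 => S _; rewrite null subrr mulr0. Qed.

End Potential.

Section PositionValue.
Variables (n : nat) (R : realFieldType).
Implicit Types (g h E G S : network n) (a l : link n) (v : network n -> R).

Lemma position_value_potential v G g i : v set0 = 0 -> g \subset G ->
  position_value v g i =
  2^-1 * \sum_(a in links_of G i) (potential v g - potential v (g :\ a)).
Proof.
move=> v0 gG; congr (_ * _).
rewrite [RHS](bigID (mem g)) /= [X in _ = _ + X]big1 ?addr0; last first.
  by move=> a /andP[_ ag]; rewrite setD1_id ?subrr.
apply: eq_big => a; last by rewrite inE => /andP[ag _]; apply: shapley_potential.
by rewrite !inE; case ag: (a \in g); rewrite ?andbF ?andbT // (subsetP gG _ ag).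
Qed.

Lemma position_value_balanced v G g i j : v set0 = 0 -> g \subset G ->
  \sum_(l in links_of G j) (position_value v g i - position_value v (g :\ l) i) =
  \sum_(l in links_of G i) (position_value v g j - position_value v (g :\ l) j).
Proof.
move=> v0 gG; pose P := potential v.
have gG' l : g :\ l \subset G by apply: subset_trans (subsetDl _ _) gG.
have diff k l : position_value v g k - position_value v (g :\ l) k =
    2^-1 * \sum_(a in links_of G k)
             (P g - P (g :\ a) - (P (g :\ l) - P (g :\ l :\ a))).
  rewrite (position_value_potential _ v0 (gG' l)) (position_value_potential _ v0 gG).
  by rewrite -mulrBr -sumrB.
under eq_bigr do rewrite diff.
under [RHS]eq_bigr do rewrite diff.
rewrite -!mulr_sumr exchange_big; congr (_ * _); apply: eq_bigr => a _.
by apply: eq_bigr => b _; rewrite /P !setDDl (setUC [set a]); ring.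
Qed.

Lemma sum_position_value_component v E h g :
  h \in components E -> g \subset E ->
  \sum_(i in players h) position_value v g i = \sum_(l in g | l \in h) shapley v g l.
Proof.
rewrite inE => /is_componentP[_ _ _ cl] gE.
have ends l : l \in g ->
    \sum_(i in players h | i \in val l) shapley v g l =
    if l \in h then shapley v g l *+ 2 else 0.
  move=> lg; case: ifP => lh.
    rewrite -[in RHS](eqP (valP l)) -sumr_const; apply: eq_bigl => i.
    by case il: (i \in val l); rewrite ?andbF // (players_link lh il).
  by apply: big1 => i /andP[ih il]; move: (cl i l ih (subsetP gE _ lg) il); rewrite lh.
rewrite -mulr_sumr (exchange_big_dep (mem g)) /= => [|i l _]; last first.
  by rewrite inE => /andP[].
transitivity (2^-1 * \sum_(l in g) (if l \in h then shapley v g l *+ 2 else 0)).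
  congr (_ * _); apply: eq_bigr => l lg; rewrite -ends //.
  by apply: eq_bigl => i; rewrite inE lg.
by rewrite -big_mkcondr sumrMnl mulr2n; field.
Qed.

Lemma sum_shapley_component v E h g : v set0 = 0 -> component_additive v ->
  h \in components E -> g \subset E ->
  \sum_(l in g | l \in h) shapley v g l = v (g :&: h).
Proof.
move=> v0 ca hc gE.
(* On subnetworks of g, v is the sum of its parts inside and outside h; the
   links of h are null in the outside part and the other links in the inside
   part. *)
pose vin S := v (S :&: h); pose vout S := v (S :\: h).
have v_split S : S \subset g -> v S = vin S + vout S.
  by move=> Sg; apply: component_additive_setID ca hc (subset_trans Sg gE).
rewrite -[RHS]/(vin g) -(shapley_efficient g (u := vin)); last by rewrite /vin set0I.
rewrite [RHS](bigID (mem h)) /= [X in _ = _ + X]big1 ?addr0 => [|l /andP[_ lh]].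
  apply: eq_bigr => l /andP[lg lh]; rewrite (eq_shapley lg v_split) shapleyD.
  rewrite [X in _ + X]shapley_null ?addr0 // => S.
  by congr v; apply/setP => x; rewrite !inE; case: eqP => [->|] //=; rewrite lh.
apply: shapley_null => S; congr v; apply/setP => x; rewrite !inE.
by case: eqP => [->|] //=; rewrite (negbTE lh) andbF.
Qed.

End PositionValue.

Section ExpectedPositionValue.
Variables (n : nat) (R : realFieldType).
Implicit Types (g h E : network n) (l : link n) (v rho : network n -> R).

Lemma remove_linkE rho l g :
  remove_link rho l g = if l \in g then 0 else rho g + rho (l |: g).
Proof.
rewrite /remove_link /restrict subsetD1 subsetT /=; case lg: (l \in g) => //=.
rewrite setCD setCT set0U (bigID (fun h => l \in h)) /= addrC; congr (_ + _).
  by rewrite (big_pred1 set0) ?setU0 // => h; rewrite /= -subsetD1 setDv subset0.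
by rewrite (big_pred1 [set l]) ?(setUC g) // => h /=; rewrite eqEsubset sub1set.
Qed.

Lemma epv_remove_link v rho l i :
  expected_position_value v (remove_link rho l) i =
  \sum_(g : network n) rho g * position_value v (g :\ l) i.
Proof.
rewrite /expected_position_value (sum_split_setU1 l (fun g => rho g * _)).
rewrite (bigID (fun g => l \in g)) /= big1 ?add0r => [|g lg]; last first.
  by rewrite remove_linkE lg mul0r.
apply: eq_bigr => g lg; rewrite remove_linkE (negbTE lg) setU1K // setD1_id //.
by rewrite mulrDl.
Qed.

Lemma prob_ge0 rho g : is_prob rho -> 0 <= rho g.
Proof. by case=> r01 _; case/andP: (r01 g). Qed.

Lemma subset_extent rho g : 0 < rho g -> g \subset extent rho.
Proof. by move=> rho_g; apply: (bigcup_sup g). Qed.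

Lemma mulr_on_extent rho g (x y : R) : is_prob rho ->
  (g \subset extent rho -> x = y) -> rho g * x = rho g * y.
Proof.
move=> pr xy; have := prob_ge0 g pr; rewrite le_eqVlt => /predU1P[<-|].
  by rewrite !mul0r.
by move/subset_extent/xy->.
Qed.

Lemma sum_support rho (F : network n -> R) : is_prob rho ->
  \sum_(g | 0 < rho g) rho g * F g = \sum_g rho g * F g.
Proof.
move=> pr; rewrite [RHS](bigID (fun g => 0 < rho g)) /=.
rewrite [X in _ = _ + X]big1 ?addr0 // => g /negbTE rho_g.
by have := prob_ge0 g pr; rewrite le_eqVlt rho_g orbF => /eqP <-; rewrite mul0r.
Qed.

Lemma is_prob_remove_link rho l : is_prob rho -> is_prob (remove_link rho l).
Proof.
move=> pr; have [_ rho1] := pr.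
have ge0 g : 0 <= remove_link rho l g.
  by rewrite remove_linkE; case: ifP => // _; rewrite addr_ge0 ?prob_ge0.
have sum1 : \sum_g remove_link rho l g = 1.
  rewrite -rho1 (sum_split_setU1 l rho) (bigID (fun g => l \in g)) /= big1 ?add0r.
    by apply: eq_bigr => g lg; rewrite remove_linkE (negbTE lg).
  by move=> g lg; rewrite remove_linkE lg.
split=> // g; rewrite ge0 /= -sum1 (bigD1 g) //= lerDl.
by apply: sumr_ge0 => h _; apply: ge0.
Qed.

Lemma extent_remove_link rho l : is_prob rho ->
  extent (remove_link rho l) \subset extent rho :\ l.
Proof.
move=> pr; apply/bigcupsP => g; rewrite remove_linkE.
case: ifP => lg; first by rewrite ltxx.
rewrite subsetD1 lg andbT => rho_g.
have [|] := boolP (0 < rho g); first exact: subset_extent.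
rewrite lt_def (prob_ge0 _ pr) andbT negbK => /eqP rho_g0.
move: rho_g; rewrite rho_g0 add0r => /subset_extent.
exact: subset_trans (subsetUr _ _).
Qed.

Lemma epv_allocation_rule : is_allocation_rule (@expected_position_value n R).
Proof.
move=> v rho _ pr i; rewrite inE => iso; apply: big1 => g _.
rewrite -[RHS](mulr0 (rho g)); apply: mulr_on_extent => // gE.
rewrite /position_value big1 ?mulr0 // => l; rewrite inE => /andP[lg il].
by rewrite (players_link (subsetP gE _ lg) il) in iso.
Qed.

Lemma epv_component_balanced v rho :
  v set0 = 0 -> component_additive v -> is_prob rho ->
  component_balanced (@expected_position_value n R) v rho.
Proof.
move=> v0 ca pr h hc; rewrite sum_support // exchange_big /=.
apply: eq_bigr => g _; rewrite -mulr_sumr; apply: mulr_on_extent => // gE.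
rewrite (sum_position_value_component _ hc gE).
exact: sum_shapley_component v0 ca hc gE.
Qed.

Lemma epv_balanced_link_contributions v rho : v set0 = 0 -> is_prob rho ->
  balanced_link_contributions (@expected_position_value n R) v rho.
Proof.
move=> v0 pr i j _.
have diff k l : expected_position_value v rho k -
                expected_position_value v (remove_link rho l) k =
    \sum_g rho g * (position_value v g k - position_value v (g :\ l) k).
  rewrite epv_remove_link -sumrB.
  by apply: eq_bigr => g _; rewrite mulrBr.
under eq_bigr do rewrite diff.
under [RHS]eq_bigr do rewrite diff.
rewrite exchange_big [RHS]exchange_big; apply: eq_bigr => g _; rewrite -!mulr_sumr.
by apply: mulr_on_extent => // gE; apply: position_value_balanced.
Qed.

End ExpectedPositionValue.

Lemma eq0_proportional (R : realFieldType) (I : finType) (A : {set I})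
    (w d : I -> R) i :
  i \in A -> 0 < w i -> {in A, forall j, 0 <= w j} ->
  {in A, forall j, w j * d i = w i * d j} -> \sum_(j in A) d j = 0 -> d i = 0.
Proof.
move=> iA wi_gt0 w_ge0 wd d0.
have wA_gt0 : 0 < \sum_(j in A) w j.
  rewrite (bigD1 i) //=; apply: lt_le_trans wi_gt0 _; rewrite lerDl.
  by apply: sumr_ge0 => j /andP[jA _]; apply: w_ge0.
have : d i * \sum_(j in A) w j = 0.
  rewrite mulr_sumr.
  under eq_bigr => j jA do rewrite mulrC wd //.
  by rewrite -mulr_sumr d0 mulr0.
by move/eqP; rewrite mulf_eq0 (gt_eqF wA_gt0) orbF => /eqP.
Qed.

Section Uniqueness.
Variables (n : nat) (R : realFieldType) (Psi : alloc n R).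
Hypothesis Psi_alloc : is_allocation_rule Psi.
Hypothesis Psi_axioms : forall v rho : network n -> R, in_D v rho ->
  component_balanced Psi v rho /\ balanced_link_contributions Psi v rho.

Lemma eq_epv_of_remove_link v rho : in_D v rho ->
  (forall l, l \in extent rho ->
     Psi v (remove_link rho l) =1 expected_position_value v (remove_link rho l)) ->
  Psi v rho =1 expected_position_value v rho.
Proof.
move=> D IH i; have [v0 pr ca] := D; have [cbP blcP] := Psi_axioms D.
pose d j := Psi v rho j - expected_position_value v rho j.
apply/eqP; rewrite -subr_eq0 -/(d i); apply/eqP.
have [ip|ni] := boolP (i \in players (extent rho)); last first.
  have iso : i \in isolated (extent rho) by rewrite inE.
  by rewrite /d (Psi_alloc v0 pr iso) (epv_allocation_rule v0 pr iso) subrr.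
have [h hc ih] := exists_component ip.
pose L j := (#|links_of (extent rho) j|)%:R : R.
apply: (eq0_proportional (w := L) ih) => [|j _|j _|].
- rewrite ltr0n lt0n cards_eq0; apply/set0Pn.
  by case/playersP: ip => l lE il; exists l; rewrite inE lE.
- exact: ler0n.
- have [<- // | ij] := eqVneq i j.
  have sum_d a b : \sum_(l in links_of (extent rho) b) d a =
      \sum_(l in links_of (extent rho) b)
         (Psi v rho a - Psi v (remove_link rho l) a) -
      \sum_(l in links_of (extent rho) b)
         (expected_position_value v rho a -
          expected_position_value v (remove_link rho l) a).
    rewrite -sumrB; apply: eq_bigr => l; rewrite inE => /andP[lE _].
    by rewrite IH // /d; ring.
  have := sum_d i j.
  rewrite (blcP i j ij) (epv_balanced_link_contributions v0 pr ij) -sum_d.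
  by rewrite !sumr_const /L !mulr_natl.
- by rewrite sumrB (cbP h hc) (epv_component_balanced v0 ca pr hc) subrr.
Qed.

Lemma eq_epv v rho : in_D v rho -> Psi v rho =1 expected_position_value v rho.
Proof.
have [k] : exists k, (#|extent rho| <= k)%N by exists #|extent rho|.
elim: k rho => [|k IHk] rho le_k D; apply: eq_epv_of_remove_link (D) _ => l lE.
  by move: le_k; rewrite leqn0 cards_eq0 => /eqP E0; rewrite E0 inE in lE.
have [v0 pr ca] := D.
apply: IHk; last by split=> //; apply: is_prob_remove_link.
apply: leq_trans (subset_leq_card (extent_remove_link l pr)) _.
by move: le_k; rewrite (cardsD1 l) lE add1n ltnS.
Qed.

End Uniqueness.

Theorem mainTheorem3 (n : nat) (R : realFieldType) :
  (* (i) *)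
  [/\ is_allocation_rule (@expected_position_value n R),
      (forall v rho : network n -> R, in_D v rho ->
         component_balanced (@expected_position_value n R) v rho /\
         balanced_link_contributions (@expected_position_value n R) v rho) &
  (* (ii) *)
      forall Psi : alloc n R,
        is_allocation_rule Psi ->
        (forall v rho : network n -> R, in_D v rho ->
           component_balanced Psi v rho /\ balanced_link_contributions Psi v rho) ->
        forall v rho : network n -> R, in_D v rho ->
          forall i : 'I_n, Psi v rho i = expected_position_value v rho i].
Proof.
split=> [|v rho [v0 pr ca]|Psi Psi_alloc Psi_axioms v rho D].
- exact: epv_allocation_rule.
- split; [exact: epv_component_balanced | exact: epv_balanced_link_contributions].
- exact: eq_epv.
Qed.
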